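(* Let $n\ge 3$. For an SSM-recurrent configuration $c$ on $W_n$, let $\Phi_W(c)=(\mathcal O,M)$ where $\mathcal O=\mathcal O(m(c))$ and $M$ is the set of vertices $i\in[n]$ with $c_i=2$ that are not cyclically first maximal vertices of $c$. Then $\Phi_W$ is a bijection from the set of SSM-recurrent configurations on $W_n$ to the set $\mathrm{PMO}(C_n)$ of properly-marked orientations of $C_n$. Moreover $\mathrm{level}(c)=|M|$ and $\mathrm{weight}^{01^*}(c)$ equals the number of clockwise-directed edges of $\mathcal O$.
   Context: $C_n$: cycle on $[n]$ with edges $\{i,i+1\}$ (indices mod $n$, vertices arranged clockwise); $W_n$: $C_n$ plus sink $0$ adjacent to all of $[n]$. Stable configurations on $W_n$ are $c\in\{0,1,2\}^n$. SSM (parameter $p\in(0,1)$: a toppling vertex sends a grain to each neighbour independently with probability $p$, grains to the sink vanish); its Markov chain adds a grain at a random vertex and stabilises; SSM-recurrent = recurrent state; known: stable $c$ is SSM-recurrent iff for all $i,j$ with $c_i=c_j=0$ some $k\in(i,j)$ has $c_k=2$, where $(i,j)$ is the set of vertices strictly between $i$ and $j$ clockwise from $i$ to $j$ and $(i,i)=[n]\setminus\{i\}$. Minimal SSM-recurrent: no other SSM-recurrent configuration is componentwise $\le c$. Level: $\mathrm{level}(c)=\sum_i c_i-n$. A vertex $i$ is cyclically first maximal in $c$ if $c_i=2$ and there is $j$ with $c_j=0$ and $c_k=1$ for all $k\in(j,i)$. Canonical minimal configuration $m(c)$: $m(c)_i=0$ if $c_i=0$, $2$ if $i$ is cyclically first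 maximal, $1$ otherwise. For a minimal SSM-recurrent $c'$, $\mathcal O(c')$ is the unique orientation of $C_n$ with in-degree $c'_i$ at every vertex $i$ if $c'\ne(1,\ldots,1)$, and the counter-clockwise directed cycle ($i+1\to i$ for all $i$) if $c'=(1,\ldots,1)$. An edge $\{i,i+1\}$ is clockwise if directed $i\to i+1$, counter-clockwise if $i+1\to i$. A properly-marked orientation of $C_n$ is a pair $(\mathcal O,M)$, $\mathcal O$ an orientation of $C_n$ and $M\subseteq[n]$, such that every $i\in M$ satisfies $i+1\to i\to i-1$ in $\mathcal O$, and $\mathcal O$ has at least one counter-clockwise edge. A $01^*$-chain of $c$ is a set of consecutive vertices $j,j+1,\ldots,j+k$ with $c_j=0$ and $c_{j'}=1$ for $j<j'\le j+k$; $\mathrm{weight}^{01^*}(c)$ is the number of vertices $i$ belonging to some $01^*$-chain (i.e. $c_i=0$, or $c_i=1$ and there is $j$ with $c_j=0$ and $c_k=1$ for all $k$ in the clockwise half-open interval $(j,i]$). *)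

From mathcomp Require Import all_boot all_order all_algebra.
Set Implicit Arguments. Unset Strict Implicit. Unset Printing Implicit Defensive.

(* Vertices of C_n: 'I_n, vertex k of 'I_n stands for vertex k+1 of [n].
   Clockwise successor i+1 is ordS i, predecessor i-1 is ord_pred i.
   Edge {i, i+1} is indexed by i. *)

Section Defs.
Variable n : nat.

Definition config := {ffun 'I_n -> 'I_3}.
Definition cv (c : config) (i : 'I_n) : nat := nat_of_ord (c i).

Definition cdist (i j : 'I_n) : nat := (j + n - i) %% n.

(* k belongs to the open clockwise interval (i,j); (i,i) = [n] \ {i} *)
Definition in_open (i j k : 'I_n) : bool :=
  (0 < cdist i k) && (cdist i k < (if i == j then n else cdist i j)).

(* SSM-recurrence, via the known characterisation *)
Definition ssm_recurrent (c : config) : bool :=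
  [forall i, forall j, (cv c i == 0) && (cv c j == 0) ==>
     [exists k, in_open i j k && (cv c k == 2)]].

Definition level (c : config) : int := (\sum_i cv c i)%:Z - n%:Z.

Definition cyc_first_max (c : config) (i : 'I_n) : bool :=
  (cv c i == 2) &&
  [exists j, (cv c j == 0) && [forall k, in_open j i k ==> (cv c k == 1)]].

Definition mcan (c : config) (i : 'I_n) : nat :=
  if cv c i == 0 then 0 else if cyc_first_max c i then 2 else 1.

(* orientation: o i = true iff edge {i,i+1} is directed i -> i+1 (clockwise) *)
Definition orientation := {ffun 'I_n -> bool}.

Definition indeg (o : orientation) (i : 'I_n) : nat :=
  (o (ord_pred i) : nat) + (~~ o i : nat).

Definition ccw_cycle : orientation := [ffun=> false].

(* O(c') for a minimal recurrent c' : the unique orientation with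
   in-degree c'_i, or the counter-clockwise cycle if c' = (1,...,1). *)
Definition orient_of (c' : 'I_n -> nat) : orientation :=
  if [forall i, c' i == 1] then ccw_cycle
  else odflt ccw_cycle [pick o : orientation | [forall i, indeg o i == c' i]].

Definition clockwise_edges (o : orientation) : nat := #|[set i | o i]|.

Definition properly_marked (p : orientation * {set 'I_n}) : bool :=
  [forall i, (i \in p.2) ==> (~~ p.1 i && ~~ p.1 (ord_pred i))] &&
  [exists i, ~~ p.1 i].

Definition marks (c : config) : {set 'I_n} :=
  [set i | (cv c i == 2) && ~~ cyc_first_max c i].

Definition PhiW (c : config) : orientation * {set 'I_n} :=
  (orient_of (mcan c), marks c).

Definition in_01chain (c : config) (i : 'I_n) : bool :=
  (cv c i == 0) ||
  ((cv c i == 1) &&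
   [exists j, (cv c j == 0) && [forall k, in_open j i k ==> (cv c k == 1)]]).

Definition weight01 (c : config) : nat := #|[set i | in_01chain c i]|.

End Defs.

From mathcomp Require Import all_boot all_order all_algebra zify.
Set Implicit Arguments. Unset Strict Implicit. Unset Printing Implicit Defensive.
Import GRing.Theory.

(* Orient the edge {i, i+1} clockwise exactly when i lies on a 01*-chain.
   Chain membership satisfies the recursion "i is on a chain iff c_i = 0, or
   c_i = 1 and i-1 is on a chain", and SSM-recurrence says precisely that the
   vertex before a 0 is never on a chain.  Hence this orientation has
   in-degree m(c) and a counter-clockwise edge, so it is O(m(c)); its
   clockwise edges are counted by weight^{01*}(c), and c = indeg O + 1_M,
   which gives level(c) = |M| and injectivity.  Conversely, for a properly
   marked (O, M) the configuration indeg O + 1_M takes values in {0,1,2}, and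
   O satisfies the chain recursion for it, so O is its chain orientation (a
   solution of the recursion is determined by one value).  Two zeros with no
   2 between them would propagate clockwise edges from the first zero up to
   the edge entering the second, contradicting its in-degree 0. *)

Section CyclicArcs.
Variable n : nat.
Implicit Types i j k : 'I_n.

Lemma val_ord_pred i : ord_pred i = (if i == 0 :> nat then n.-1 else i.-1) :> nat.
Proof.
have lt_in := ltn_ord i; rewrite /=; case: eqP => [-> | /eqP i_neq0].
  by rewrite add0n modn_small //; lia.
have -> : (i + n).-1 = i.-1 + n by lia.
by rewrite modnDr modn_small //; lia.
Qed.

Lemma cdistE i j : cdist i j = if i <= j then j - i else j + n - i.
Proof.
have lt_in := ltn_ord i; have lt_jn := ltn_ord j; rewrite /cdist; case: leqP => le_ij.
  have -> : j + n - i = (j - i) + n by lia.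
  by rewrite modnDr modn_small //; lia.
by rewrite modn_small //; lia.
Qed.

Lemma eq_ordE i j : (i == j) = (i == j :> nat).
Proof. by []. Qed.

Local Ltac cyclic_lia :=
  repeat match goal with x : 'I_n |- _ =>
    lazymatch goal with
    | _ : is_true (nat_of_ord x < n) |- _ => fail
    | _ => have := ltn_ord x; move=> ?
    end end;
  repeat match goal with H : is_true _ |- _ => move: H | H : _ = _ |- _ => move: H end;
  rewrite /in_open ?cdistE ?eq_ordE ?val_ord_pred;
  repeat case: ifP; lia.

Lemma in_open_pred_self i k : in_open (ord_pred i) i k = false.
Proof. cyclic_lia. Qed.

Lemma in_open_predr i j k : j != ord_pred i ->
  in_open j i k = in_open j (ord_pred i) k || (k == ord_pred i).
Proof. cyclic_lia. Qed.

Lemma ord_pred_in_open i j : (ord_pred j == i) || in_open i j (ord_pred j).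
Proof. cyclic_lia. Qed.

Lemma open_arc_ind i j (P : pred 'I_n) :
  P i -> (forall k, in_open i j k -> P (ord_pred k) -> P k) ->
  forall k, (k == i) || in_open i j k -> P k.
Proof.
move=> Pi Pstep k; move Edist: (cdist i k) => d; elim: d k Edist => [|d IHd] k Edist k_arc.
  by have /eqP -> : k == i by cyclic_lia.
have k_open : in_open i j k by cyclic_lia.
by apply: Pstep => //; apply: IHd; cyclic_lia.
Qed.

Lemma cycle_ind i (P : pred 'I_n) :
  P i -> (forall k, P (ord_pred k) -> P k) -> forall k, P k.
Proof.
move=> Pi Pstep k; apply: (open_arc_ind (j := i) Pi) => [k' _|]; first exact: Pstep.
cyclic_lia.
Qed.

Lemma eq_cycle_rec (T : eqType) (F : 'I_n -> T -> T) (f g : 'I_n -> T) i :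
  (forall k, f k = F k (f (ord_pred k))) -> (forall k, g k = F k (g (ord_pred k))) ->
  f i = g i -> f =1 g.
Proof.
move=> f_rec g_rec /eqP fg_i k; apply/eqP; move: k.
apply: (cycle_ind (P := fun k => f k == g k)) fg_i _ => k.
by rewrite [f k]f_rec [g k]g_rec => /eqP ->.
Qed.

End CyclicArcs.

Section Orientations.
Variable n : nat.
Implicit Types (o : orientation n) (i : 'I_n).

Lemma indeg_eq1 o i : (indeg o i == 1) = (o (ord_pred i) == o i).
Proof. by rewrite /indeg; case: (o i); case: (o (ord_pred i)). Qed.

Lemma sum_indeg o : \sum_i indeg o i = n.
Proof.
rewrite big_split /= (reindex_inj (@ordS_inj n)) -big_split /=.
rewrite -[RHS]card_ord -sum1_card; apply: eq_bigr => i _.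
by rewrite ordSK; case: (o i).
Qed.

Lemma eq_indeg_orientation o o' :
  indeg o =1 indeg o' -> o = o' \/ (forall i, indeg o i = 1).
Proof.
have all_cw p p' i : indeg p =1 indeg p' -> p i -> ~~ p' i -> forall k, indeg p k = 1.
  move=> eq_deg p_i p'_i.
  have p_gt_p' : forall k, p k && ~~ p' k.
    apply: (cycle_ind (i := i)) => [|k /andP[p_k p'_k]]; first by rewrite p_i.
    by have := eq_deg k; rewrite /indeg p_k (negbTE p'_k); case: (p k); case: (p' k).
  move=> k; have /andP[p_k _] := p_gt_p' k; have /andP[p_pk _] := p_gt_p' (ord_pred k).
  by rewrite /indeg p_k p_pk.
move=> eq_deg; have [i /= o_diff|o_eq] := pickP [pred i | o i != o' i]; last first.
  by left; apply/ffunP => i; apply/eqP/negbFE/o_eq.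
right; case o_i: (o i) o_diff; case o'_i: (o' i) => //= _ k.
  by apply: (all_cw o o' i); rewrite ?o'_i.
by rewrite eq_deg; apply: (all_cw o' o i) => [{}k||]; rewrite ?eq_deg ?o_i.
Qed.

Lemma orient_ofE (d : 'I_n -> nat) o :
  indeg o =1 d -> [exists i, ~~ o i] -> orient_of d = o.
Proof.
move=> deg_o /existsP[i0 o_i0]; rewrite /orient_of; case: ifP => [/forallP d1 | not_d1].
  have ccw : forall k, ~~ o k.
    by apply: (cycle_ind o_i0) => k; have := d1 k; rewrite -deg_o indeg_eq1 => /eqP <-.
  by apply/ffunP => k; rewrite ffunE; apply/esym/negbTE/ccw.
case: pickP => [o' /forallP /= deg_o' | no_o] /=; last first.
  by have := no_o o; move/negbT/forallPn => [i]; rewrite deg_o eqxx.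
have [//|deg1] := eq_indeg_orientation (fun i => etrans (eqP (deg_o' i)) (esym (deg_o i))).
by move/negbT/forallPn: not_d1 => [i]; rewrite -(eqP (deg_o' i)) deg1.
Qed.

End Orientations.

Section RecurrentConfigurations.
Variable n : nat.
Implicit Types (c : config n) (i j k : 'I_n).

Lemma cv_lt3 c i : cv c i < 3.
Proof. exact: ltn_ord. Qed.

Definition follows_01chain c i : bool :=
  [exists j, (cv c j == 0) && [forall k, in_open j i k ==> (cv c k == 1)]].

Lemma follows_01chainE c i : follows_01chain c i = in_01chain c (ord_pred i).
Proof.
set p := ord_pred i; apply/idP/idP.
- case/existsP=> j /andP[c_j /forallP ones]; have [<-|j_neq_p] := eqVneq j p.
    by rewrite /in_01chain c_j.
  have p_open : in_open j i p by rewrite in_open_predr // eqxx orbT.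
  apply/orP; right; rewrite (implyP (ones p) p_open); apply/existsP; exists j.
  rewrite c_j; apply/forallP => k; apply/implyP => k_open.
  by apply: (implyP (ones k)); rewrite in_open_predr // k_open.
- case/orP => [c_p | /andP[c_p /existsP[j /andP[c_j /forallP ones]]]].
    by apply/existsP; exists p; rewrite c_p; apply/forallP => k; rewrite in_open_pred_self.
  have j_neq_p : j != p by apply: contraTneq c_j => ->; rewrite (eqP c_p).
  apply/existsP; exists j; rewrite c_j; apply/forallP => k.
  rewrite in_open_predr //; apply/implyP => /orP[k_open | /eqP-> //].
  exact: (implyP (ones k)).
Qed.

Lemma in_01chain_rec c i :
  in_01chain c i = (cv c i == 0) || (cv c i == 1) && in_01chain c (ord_pred i).
Proof. by rewrite -follows_01chainE. Qed.

Lemma cyc_first_maxE c i : cyc_first_max c i = (cv c i == 2) && in_01chain c (ord_pred i).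
Proof. by rewrite -follows_01chainE. Qed.

Lemma in_01chain_has0 c i : in_01chain c i -> exists j, cv c j = 0.
Proof.
by case/orP => [/eqP c_i | /andP[_ /existsP[j /andP[/eqP c_j _]]]]; [exists i | exists j].
Qed.

Lemma recurrent_in_01chain_pred0 c i :
  ssm_recurrent c -> cv c i = 0 -> in_01chain c (ord_pred i) = false.
Proof.
move=> c_rec c_i; apply/negbTE; rewrite -follows_01chainE.
apply/negP => /existsP[j /andP[c_j /forallP ones]].
have : (cv c j == 0) && (cv c i == 0) by rewrite c_j c_i.
move/(implyP (forallP (forallP c_rec j) i)) => /existsP[k /andP[k_open /eqP c_k]].
by have := implyP (ones k) k_open; rewrite c_k.
Qed.

Definition chain_orientation c : orientation n := [ffun i => in_01chain c i].

Section Recurrent.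
Variable c : config n.
Hypothesis c_rec : ssm_recurrent c.

Lemma cv_chain_orientation i :
  cv c i = indeg (chain_orientation c) i + (i \in marks c).
Proof.
rewrite /indeg !ffunE inE cyc_first_maxE [in_01chain c i]in_01chain_rec.
have := cv_lt3 c i; have := @recurrent_in_01chain_pred0 c i c_rec.
case: (cv c i) => [|[|[|m]]] //= pred0 _; first by rewrite pred0.
all: by case: (in_01chain c (ord_pred i)).
Qed.

Lemma indeg_chain_orientation : indeg (chain_orientation c) =1 mcan c.
Proof.
move=> i; have := cv_chain_orientation i.
rewrite /mcan inE cyc_first_maxE /indeg !ffunE [in_01chain c i]in_01chain_rec.
by case: (cv c i) => [|[|[|m]]] //=; case: (in_01chain c (ord_pred i)).
Qed.

Lemma chain_orientation_ccw : 0 < n -> [exists i, ~~ chain_orientation c i].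
Proof.
move=> n_gt0; apply: contraT => /existsPn /= all_cw.
have := all_cw (Ordinal n_gt0); rewrite ffunE negbK => /in_01chain_has0[j c_j].
by have := all_cw (ord_pred j); rewrite ffunE recurrent_in_01chain_pred0.
Qed.

Lemma PhiWE : 0 < n -> PhiW c = (chain_orientation c, marks c).
Proof.
by move=> n_gt0; rewrite /PhiW (orient_ofE indeg_chain_orientation) ?chain_orientation_ccw.
Qed.

Lemma PhiW_properly_marked : 0 < n -> properly_marked (PhiW c).
Proof.
move=> n_gt0; rewrite PhiWE // /properly_marked chain_orientation_ccw // andbT /=.
apply/forallP => i; apply/implyP; rewrite inE cyc_first_maxE !ffunE => /andP[/eqP c_i].
by rewrite [in_01chain c i]in_01chain_rec c_i.
Qed.

Lemma level_card_marks : level c = #|marks c|.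
Proof.
rewrite /level (eq_bigr _ (fun i _ => cv_chain_orientation i)) big_split /= sum_indeg.
have -> : \sum_i (i \in marks c : nat) = #|marks c| by rewrite -sum1_card [RHS]big_mkcond.
by rewrite PoszD addrAC subrr add0r.
Qed.

Lemma weight01_clockwise_edges : weight01 c = clockwise_edges (chain_orientation c).
Proof. by apply: eq_card => i; rewrite !inE ffunE. Qed.

End Recurrent.

Lemma PhiW_inj : 0 < n -> {in [pred c | ssm_recurrent c] &, injective (@PhiW n)}.
Proof.
move=> n_gt0 c1 c2 c1_rec c2_rec; rewrite !PhiWE // => -[o_eq M_eq].
apply/ffunP => i; apply: val_inj; change (cv c1 i = cv c2 i).
by rewrite !cv_chain_orientation // o_eq M_eq.
Qed.

Section Inverse.
Variables (o : orientation n) (M : {set 'I_n}).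
Hypothesis o_M_pm : properly_marked (o, M).

Definition config_of_pmo : config n := [ffun i => inord (indeg o i + (i \in M))].

Lemma marked_ccw i : i \in M -> ~~ o i && ~~ o (ord_pred i).
Proof. by case/andP: o_M_pm => /forallP marked _; apply/implyP. Qed.

Lemma indeg_marked i : i \in M -> indeg o i = 1.
Proof. by case/marked_ccw/andP; rewrite /indeg => /negbTE-> /negbTE->. Qed.

Lemma cv_config_of_pmo i : cv config_of_pmo i = indeg o i + (i \in M).
Proof.
rewrite /cv ffunE inordK //; case M_i: (i \in M); first by rewrite indeg_marked.
by rewrite /indeg; case: (o _); case: (o i).
Qed.

Lemma config_of_pmo_rec i :
  o i = (cv config_of_pmo i == 0) || (cv config_of_pmo i == 1) && o (ord_pred i).
Proof.
rewrite cv_config_of_pmo; case M_i: (i \in M).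
  by rewrite indeg_marked //; case/marked_ccw/andP: M_i => /negbTE->.
by rewrite /indeg addn0; case: (o i); case: (o (ord_pred i)).
Qed.

Lemma in_01chain_config_of_pmo : in_01chain config_of_pmo =1 o.
Proof.
pose F k b := (cv config_of_pmo k == 0) || (cv config_of_pmo k == 1) && b.
have eq_rec := eq_cycle_rec (F := F) (in_01chain_rec config_of_pmo) config_of_pmo_rec.
have [i0 /eqP c_i0 | no0] := pickP [pred i | cv config_of_pmo i == 0].
  by apply: (eq_rec i0); rewrite in_01chain_rec config_of_pmo_rec c_i0.
case/andP: o_M_pm => _ /existsP[i1 /= /negbTE o_i1]; apply: (eq_rec i1); rewrite o_i1.
by apply/negbTE/negP => /in_01chain_has0[j c_j]; have := no0 j; rewrite /= c_j.
Qed.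

Lemma recurrent_config_of_pmo : ssm_recurrent config_of_pmo.
Proof.
apply/forallP => i; apply/forallP => j; apply/implyP => /andP[/eqP c_i /eqP c_j].
apply: contraT => /existsPn /= no2.
have o_arc : forall k, (k == i) || in_open i j k -> o k.
  apply: (open_arc_ind (P := fun k => o k)) => [|k k_open o_pk].
    by rewrite config_of_pmo_rec c_i.
  rewrite config_of_pmo_rec o_pk; have := no2 k; rewrite k_open.
  by have := cv_lt3 config_of_pmo k; case: (cv _ k) => [|[|[|m]]].
move: (o_arc _ (ord_pred_in_open i j)) c_j.
by rewrite cv_config_of_pmo /indeg => ->.
Qed.

Lemma marks_config_of_pmo : marks config_of_pmo = M.
Proof.
apply/setP => i; rewrite inE cyc_first_maxE in_01chain_config_of_pmo cv_config_of_pmo.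
case M_i: (i \in M).
  by rewrite indeg_marked //; case/marked_ccw/andP: M_i => _ /negbTE->.
by rewrite /indeg addn0; case: (o i); case: (o (ord_pred i)).
Qed.

Lemma PhiW_config_of_pmo : PhiW config_of_pmo = (o, M).
Proof.
have n_gt0 : 0 < n by case/andP: o_M_pm => _ /existsP[i1 _]; apply: leq_ltn_trans (ltn_ord i1).
rewrite PhiWE ?recurrent_config_of_pmo // marks_config_of_pmo.
by congr pair; apply/ffunP => i; rewrite ffunE in_01chain_config_of_pmo.
Qed.

End Inverse.

End RecurrentConfigurations.

Unset Implicit Arguments.

Theorem mainTheorem6 (n : nat) (hn : 3 <= n) :
  {in [pred c : config n | ssm_recurrent c] &, injective (@PhiW n)} /\
  (forall c : config n, ssm_recurrent c -> properly_marked (PhiW c)) /\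
  (forall p : orientation n * {set 'I_n}, properly_marked p ->
     exists2 c : config n, ssm_recurrent c & PhiW c = p) /\
  (forall c : config n, ssm_recurrent c ->
     level c = Posz #|(PhiW c).2| /\
     weight01 c = clockwise_edges (PhiW c).1).
Proof.
have n_gt0 : 0 < n by apply: leq_trans hn.
split; last split; last split.
- exact: PhiW_inj.
- by move=> c c_rec; apply: PhiW_properly_marked.
- case=> o M o_M_pm; exists (config_of_pmo o M).
    exact: recurrent_config_of_pmo.
  exact: PhiW_config_of_pmo.
- move=> c c_rec; rewrite PhiWE //; split.
    exact: level_card_marks.
  exact: weight01_clockwise_edges.
Qed.
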